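(* Let $G$ be a finite group and $p$ a prime dividing $|G|$. There are equivalences of categories $$\mathrm{Sh}(G\text{-}\mathrm{Set},\mathcal{J}_{\rm sipp})\simeq\mathrm{Sh}(\mathcal{O}(G),\mathcal{J}_{\rm sipp})\simeq\mathrm{Sh}(\mathcal{O}_p(G),\mathcal{J}_{\min})=\mathrm{PSh}(\mathcal{O}_p(G)).$$
   Context: $G\text{-}\mathrm{Set}$ is the category of finite $G$-sets; $\mathcal{O}(G)$ its full subcategory of orbits $G/H$; $\mathcal{O}_p(G)$ the full subcategory on $G/Q$, $Q$ a $p$-subgroup. A sieve on $x$ is a set of morphisms with codomain $x$ closed under precomposition. $\mathcal{J}_{\rm sipp}$ on $G\text{-}\mathrm{Set}$: a sieve on $U$ is covering iff it contains all members of a family $\{\alpha_i:U_i\to U\}$ such that for every $u\in U$ there exist $i_0$ and $u_{i_0}\in\alpha_{i_0}^{-1}(u)$ with $[\mathrm{Stab}_G(u):\mathrm{Stab}_G(u_{i_0})]$ prime to $p$. On $\mathcal{O}(G)$, $\mathcal{J}_{\rm sipp}$ denotes the induced topology (covering sieves $S\cap\mathrm{Mor}\,\mathcal{O}(G)$ with $S$ covering in $G\text{-}\mathrm{Set}$). $\mathcal{J}_{\min}$ is the topology whose only covering sieve on $x$ is $\mathrm{Hom}(-,x)$. $\mathrm{Sh}(\mathcal{C},\mathcal{J})$ is the category of presheaves of sets $\mathfrak{F}$ such that for every covering sieve $S$ on $x$, restriction $\mathrm{Nat}(\mathrm{Hom}(-,x),\mathfrak{F})\to\mathrm{Nat}(S,\mathfrak{F})$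 is bijective; $\mathrm{PSh}(\mathcal{C})$ is the category of presheaves of sets. *)

From mathcomp Require Import all_boot all_fingroup pgroup.

Set Implicit Arguments.
Unset Strict Implicit.
Unset Printing Implicit Defensive.

(* Categories (hom-sets with Leibniz equality): used for the sites.          *)
Record Cat := MkCat {
  Ob : Type;
  Hom : Ob -> Ob -> Type;
  idm : forall x, Hom x x;
  comp : forall x y z, Hom y z -> Hom x y -> Hom x z;
  comp_idl : forall x y (f : Hom x y), comp (idm y) f = f;
  comp_idr : forall x y (f : Hom x y), comp f (idm x) = f;
  comp_assoc : forall x y z w (h : Hom z w) (g : Hom y z) (f : Hom x y),
      comp h (comp g f) = comp (comp h g) f
}.
Arguments Hom : clear implicits.
Arguments idm {C} x : rename.
Arguments comp {C x y z} : rename.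

Definition FullSub (C : Cat) (I : Type) (o : I -> Ob C) : Cat :=
  @MkCat I (fun i j => Hom C (o i) (o j)) (fun i => idm (o i))
    (fun i j k g f => comp g f)
    (fun i j f => comp_idl f) (fun i j f => comp_idr f)
    (fun i j k l h g f => comp_assoc h g f).

Definition sieve (C : Cat) (x : Ob C) := forall y, Hom C y x -> Prop.

Definition is_sieve (C : Cat) (x : Ob C) (S : sieve x) : Prop :=
  forall y z (f : Hom C y x) (g : Hom C z y), S y f -> S z (comp f g).

Definition topology (C : Cat) := forall x : Ob C, sieve x -> Prop.

Definition maxsieve (C : Cat) (x : Ob C) : sieve x := fun _ _ => True.
Arguments maxsieve {C} x _ _.

Definition Jmin (C : Cat) : topology C :=
  fun x S => is_sieve S /\ forall y (f : Hom C y x), S y f.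

Definition induced_top (C : Cat) (I : Type) (o : I -> Ob C) (J : topology C)
  : topology (FullSub o) :=
  fun i R => is_sieve R /\
    exists S : sieve (o i), J (o i) S /\
      forall j (f : Hom C (o j) (o i)), R j f <-> S (o j) f.

Record Presheaf (C : Cat) := MkPsh {
  psh :> Ob C -> Type;
  pmap : forall x y, Hom C y x -> psh x -> psh y;
  pmap_id : forall x (a : psh x), pmap (idm x) a = a;
  pmap_comp : forall x y z (f : Hom C y x) (g : Hom C z y) (a : psh x),
      pmap (comp f g) a = pmap g (pmap f a)
}.
Arguments pmap {C} p {x y} f a.

(* Natural transformations S => F, S a sieve on x viewed as a subfunctor    *)
(* of Hom(-,x).                                                             *)
Record SNat (C : Cat) (x : Ob C) (S : sieve x) (F : Presheaf C) := MkSNat {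
  snat : forall y (f : Hom C y x), S y f -> F y;
  snat_nat : forall y z (f : Hom C y x) (g : Hom C z y)
      (hf : S y f) (hfg : S z (comp f g)),
      snat hfg = pmap F g (snat hf)
}.

Definition snat_eq (C : Cat) (x : Ob C) (S : sieve x) (F : Presheaf C)
  (s t : SNat S F) : Prop :=
  forall y (f : Hom C y x) (h : S y f), snat s h = snat t h.

Definition restrict (C : Cat) (x : Ob C) (S : sieve x) (F : Presheaf C)
  (t : SNat (maxsieve x) F) : SNat S F.
Proof.
refine (@MkSNat C x S F (fun y f _ => snat t (I : maxsieve x y f)) _).
by move=> y z f g _ _; apply: snat_nat.
Defined.

Definition is_sheaf (C : Cat) (J : topology C) (F : Presheaf C) : Prop :=
  forall x (S : sieve x), J x S ->
    (forall t t' : SNat (maxsieve x) F,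
        snat_eq (restrict S t) (restrict S t') -> snat_eq t t') /\
    (forall s : SNat S F, exists t : SNat (maxsieve x) F,
        snat_eq (restrict S t) s).

Record SCat := MkSCat {
  SOb : Type;
  SHom : SOb -> SOb -> Type;
  Sheq : forall x y, SHom x y -> SHom x y -> Prop;
  Sid : forall x, SHom x x;
  Scomp : forall x y z, SHom y z -> SHom x y -> SHom x z
}.
Arguments SHom : clear implicits.
Arguments Sheq {A x y} : rename.
Arguments Sid {A} x : rename.
Arguments Scomp {A x y z} : rename.

Record Functor (A B : SCat) := MkFunctor {
  fobj :> SOb A -> SOb B;
  fmap : forall x y, SHom A x y -> SHom B (fobj x) (fobj y);
  fmap_proper : forall x y (f g : SHom A x y), Sheq f g -> Sheq (fmap f) (fmap g);
  fmap_id : forall x, Sheq (fmap (Sid x)) (Sid (fobj x));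
  fmap_comp : forall x y z (g : SHom A y z) (f : SHom A x y),
      Sheq (fmap (Scomp g f)) (Scomp (fmap g) (fmap f))
}.
Arguments fmap {A B} F {x y} f : rename.

Record EquivData (A B : SCat) := MkEquiv {
  eqv_F : Functor A B;
  eqv_G : Functor B A;
  eta : forall x : SOb A, SHom A (eqv_G (eqv_F x)) x;
  eta_inv : forall x : SOb A, SHom A x (eqv_G (eqv_F x));
  eta_iso1 : forall x, Sheq (Scomp (eta x) (eta_inv x)) (Sid x);
  eta_iso2 : forall x, Sheq (Scomp (eta_inv x) (eta x)) (Sid _);
  eta_nat : forall x y (h : SHom A x y),
      Sheq (Scomp h (eta x)) (Scomp (eta y) (fmap eqv_G (fmap eqv_F h)));
  eps : forall y : SOb B, SHom B (eqv_F (eqv_G y)) y;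
  eps_inv : forall y : SOb B, SHom B y (eqv_F (eqv_G y));
  eps_iso1 : forall y, Sheq (Scomp (eps y) (eps_inv y)) (Sid y);
  eps_iso2 : forall y, Sheq (Scomp (eps_inv y) (eps y)) (Sid _);
  eps_nat : forall x y (h : SHom B x y),
      Sheq (Scomp h (eps x)) (Scomp (eps y) (fmap eqv_F (fmap eqv_G h)))
}.

Definition cat_equivalent (A B : SCat) : Prop := inhabited (EquivData A B).

Record PNat (C : Cat) (F F' : Presheaf C) := MkPNat {
  pnat :> forall x, F x -> F' x;
  pnat_nat : forall x y (f : Hom C y x) (a : F x),
      pnat (pmap F f a) = pmap F' f (pnat a)
}.

Definition pnat_id (C : Cat) (F : Presheaf C) : PNat F F.
Proof. by refine (@MkPNat C F F (fun x a => a) _). Defined.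

Definition pnat_comp (C : Cat) (F1 F2 F3 : Presheaf C)
  (b : PNat F2 F3) (a : PNat F1 F2) : PNat F1 F3.
Proof.
refine (@MkPNat C F1 F3 (fun x u => b x (a x u)) _).
by move=> x y f u; rewrite !pnat_nat.
Defined.

Definition ShCat (C : Cat) (J : topology C) : SCat :=
  @MkSCat {F : Presheaf C | is_sheaf J F}
    (fun F F' => PNat (sval F) (sval F'))
    (fun F F' a b => forall x u, a x u = b x u)
    (fun F => pnat_id (sval F))
    (fun F1 F2 F3 b a => pnat_comp b a).

Section GSets.
Variables (gT : finGroupType) (G : {group gT}).
Local Open Scope group_scope.

Record gset := MkGSet { gcar : finType; gact : action G gcar }.

Definition equivariantb (X Y : gset) (f : {ffun gcar X -> gcar Y}) : bool :=
  [forall x, [forall g in G, f (gact X x g) == gact Y (f x) g]].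

Definition gHom (X Y : gset) := {f : {ffun gcar X -> gcar Y} | equivariantb f}.

Lemma gid_equiv (X : gset) : equivariantb [ffun x : gcar X => x].
Proof. by apply/forallP => x; apply/forall_inP => g _; rewrite !ffunE. Qed.

Lemma gcomp_equiv (X Y Z : gset) (g : gHom Y Z) (f : gHom X Y) :
  equivariantb [ffun x => sval g (sval f x)].
Proof.
case: g => g eg; case: f => f ef.
apply/forallP => x; apply/forall_inP => a Ga; rewrite !ffunE /=.
have ef' := forall_inP (forallP ef x) a Ga.
have eg' := forall_inP (forallP eg (f x)) a Ga.
by rewrite (eqP ef') (eqP eg').
Qed.

Definition gid (X : gset) : gHom X X := exist (@equivariantb X X) _ (gid_equiv X).
Definition gcomp (X Y Z : gset) (g : gHom Y Z) (f : gHom X Y) : gHom X Z :=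
  exist (@equivariantb X Z) _ (gcomp_equiv g f).

Lemma gcomp_idl X Y (f : gHom X Y) : gcomp (gid Y) f = f.
Proof. by apply: val_inj; apply/ffunP => x; rewrite /= !ffunE. Qed.
Lemma gcomp_idr X Y (f : gHom X Y) : gcomp f (gid X) = f.
Proof. by apply: val_inj; apply/ffunP => x; rewrite /= !ffunE. Qed.
Lemma gcomp_assoc X Y Z W (h : gHom Z W) (g : gHom Y Z) (f : gHom X Y) :
  gcomp h (gcomp g f) = gcomp (gcomp h g) f.
Proof. by apply: val_inj; apply/ffunP => x; rewrite /= !ffunE. Qed.

Definition GSetCat : Cat :=
  @MkCat gset gHom gid gcomp gcomp_idl gcomp_idr gcomp_assoc.

(* The transitive G-set G/H (right cosets H x, G acting by right           *)
(* multiplication), for H a subgroup of G.                                   *)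
Definition coset_pred (H : {group gT}) : pred {set gT} :=
  fun A => A \in rcosets H G.
Definition coset_car (H : {group gT}) : finType := {A : {set gT} | coset_pred H A}.

Lemma G_sub_coset_dom (H : {group gT}) : G \subset subact_dom (coset_pred H) 'Rs.
Proof.
rewrite /subact_dom.
have -> : [set x | coset_pred H x] = rcosets H G by apply/setP => x; rewrite inE.
exact: actsRs_rcosets.
Qed.

Definition coset_act (H : {group gT}) : action G (coset_car H) :=
  ((subaction (coset_car H) 'Rs) \ G_sub_coset_dom H)%act.

Definition orbit_gset (H : {group gT}) : gset := MkGSet (coset_act H).

Definition orbit_idx := {H : {group gT} | H \subset G}.
Definition OrbitCat : Cat :=
  @FullSub GSetCat _ (fun H : orbit_idx => orbit_gset (sval H)).

Definition orbitp_idx (p : nat) := {Q : {group gT} | (Q \subset G) && p.-group Q}%g.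
Definition OrbitpCat (p : nat) : Cat :=
  @FullSub GSetCat _ (fun Q : orbitp_idx p => orbit_gset (sval Q)).

Definition Jsipp (p : nat) : topology GSetCat :=
  fun (U : gset) (S : sieve (U : Ob GSetCat)) =>
    is_sieve S /\
    exists (I : Type) (Ui : I -> gset) (alpha : forall i, gHom (Ui i) U),
      (forall i, S (Ui i) (alpha i)) /\
      forall u : gcar U, exists i, exists ui : gcar (Ui i),
        sval (alpha i) ui = u /\
        coprime #|'C[u | gact U] : 'C[ui | gact (Ui i)]| p.

Definition Jsipp_orb (p : nat) : topology OrbitCat :=
  @induced_top GSetCat _ (fun H : orbit_idx => orbit_gset (sval H)) (Jsipp p).

End GSets.

Arguments GSetCat {gT} G.
Arguments OrbitCat {gT} G.
Arguments OrbitpCat {gT} G p.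
Arguments Jsipp {gT} G p _ _.
Arguments Jsipp_orb {gT} G p _ _.

From mathcomp Require Import all_boot all_fingroup pgroup sylow.
From Stdlib Require Import ProofIrrelevance FunctionalExtensionality.
From Stdlib Require Import ClassicalEpsilon.
(* Imported last, so that the presheaf action [pmap] shadows [seq.pmap]. *)

Set Implicit Arguments.
Unset Strict Implicit.
Unset Printing Implicit Defensive.

(* Every finite G-set U is J_sipp-covered by the maps G/P -> U sending the
   base coset to u, where u ranges over U and P is a Sylow p-subgroup of
   Stab(u). Conversely, a J_sipp-covering sieve on U contains every map
   G/Q -> U with Q a p-group: if Q fixes u and u_i |-> u with
   [Stab(u) : Stab(u_i)] prime to p, then a Sylow p-subgroup of Stab(u_i) is
   one of Stab(u), so by Sylow's theorem Q fixes u_i.x for some x in Stab(u),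
   and the map factors through U_i. Thus O_p(G) is dense in G-Set and every
   covering sieve is full on it; both properties pass to the induced topology
   on O(G). For such a subcategory D of a site (C, J), restriction
   Sh(C, J) -> PSh(D) is an equivalence, whose inverse is the right Kan
   extension: compatible families indexed by the maps from objects of D. *)

Lemma Jmin_sheaf (C : Cat) (F : Presheaf C) : is_sheaf (@Jmin C) F.
Proof.
move=> x S [_ Sfull]; split=> [t t' Et y f [] | s].
  exact: Et y f (Sfull y f).
unshelve eexists.
  apply: (@MkSNat C x (maxsieve x) F (fun y f _ => snat s (Sfull y f))).
  by move=> y z f g _ _; apply: snat_nat.
by move=> y f Sf /=; rewrite (proof_irrelevance _ (Sfull y f) Sf).
Qed.

Section SheafCondition.
Variables (C : Cat) (F : Presheaf C).

Definition yoneda_snat x (u : F x) : SNat (maxsieve x) F.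
Proof.
refine (@MkSNat C x (maxsieve x) F (fun y f _ => pmap F f u) _).
by move=> y z f g _ _; apply: pmap_comp.
Defined.

Lemma snat_maxsieveE x (t : SNat (maxsieve x) F) y (f : Hom C y x) :
  snat t (I : maxsieve x y f) = pmap F f (snat t (I : maxsieve x x (idm x))).
Proof. by rewrite -(snat_nat t I I) comp_idl. Qed.

Variables (J : topology C) (shF : is_sheaf J F).

Lemma sheaf_separated (x : Ob C) (S : sieve x) : J S -> forall u v : F x,
  (forall y f, S y f -> pmap F f u = pmap F f v) -> u = v.
Proof.
move=> JS u v Euv; have [uniq _] := shF JS.
have := uniq (yoneda_snat u) (yoneda_snat v) Euv x (idm x) I.
by rewrite /= !pmap_id.
Qed.

Lemma sheaf_glue (x : Ob C) (S : sieve x) : J S -> forall s : SNat S F,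
  exists u, forall y f (Sf : S y f), pmap F f u = snat s Sf.
Proof.
move=> JS s; have [_ /(_ s) [t Et]] := shF JS.
exists (snat t (I : maxsieve x x (idm x))) => y f Sf.
by rewrite -snat_maxsieveE; apply: Et.
Qed.

End SheafCondition.

(** * The comparison lemma *)

Section Comparison.
Variables (C : Cat) (Ix : Type) (o : Ix -> Ob C).
Notation D := (FullSub o).

Definition factor_sieve (x : Ob C) : sieve x := fun y f =>
  exists t : {i : Ix & (Hom C y (o i) * Hom C (o i) x)%type},
    f = comp (tagged t).2 (tagged t).1.
Arguments factor_sieve x _ _ : clear implicits.

Lemma factor_sieve_is_sieve x : is_sieve (factor_sieve x).
Proof.
move=> y z f g [[i [g1 h]] /= ->].
by exists (existT _ i (comp g1 g, h)); rewrite /= comp_assoc.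
Qed.

Definition dense_sub (J : topology C) := forall x, J x (factor_sieve x).

Definition covers_full (J : topology C) :=
  forall x S, J x S -> forall i (f : Hom C (o i) x), S (o i) f.

Section RightKanExtension.
Variable P : Presheaf D.

Definition compatible x (a : forall i, Hom C (o i) x -> P i) : Prop :=
  forall i j (f : Hom C (o i) x) (g : Hom C (o j) (o i)),
    a j (comp f g) = pmap P (g : Hom D j i) (a i f).

(* [ran P] is the right Kan extension of [P] along the inclusion of [D]. *)
Definition family x := {a : forall i, Hom C (o i) x -> P i | compatible a}.

Lemma family_eq x (a b : family x) :
  (forall i f, sval a i f = sval b i f) -> a = b.
Proof.
case: a b => [a ca] [b cb] /= Eab.
have ab : a = b.
  apply: functional_extensionality_dep => i.
  by apply: functional_extensionality => f; apply: Eab.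
by subst b; rewrite (proof_irrelevance _ ca cb).
Qed.

Lemma compatible_comp x y (h : Hom C y x) (a : family x) :
  compatible (fun i f => sval a i (comp h f)).
Proof. by move=> i j f g /=; rewrite comp_assoc; apply: (svalP a). Qed.

Definition ran : Presheaf C.
Proof.
refine (@MkPsh C family
  (fun x y h a => exist _ _ (compatible_comp h a)) _ _).
- by move=> x a; apply: family_eq => i f /=; rewrite comp_idl.
- by move=> x y z f g a; apply: family_eq => i k /=; rewrite comp_assoc.
Defined.

Lemma snat_ran_idm x (S : sieve x) (s : SNat S ran) y (f : Hom C y x)
    (Sf : S y f) i (g : Hom C (o i) y) (Sfg : S (o i) (comp f g)) :
  sval (snat s Sfg) i (idm (o i)) = sval (snat s Sf) i g.
Proof. by rewrite (snat_nat s Sf Sfg) /= comp_idr. Qed.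

End RightKanExtension.

Definition res (F : Presheaf C) : Presheaf D.
Proof.
refine (@MkPsh D (fun i => F (o i)) (fun i j f u => pmap F f u) _ _).
- by move=> i u /=; apply: pmap_id.
- by move=> i j k f g u /=; apply: pmap_comp.
Defined.

Lemma compatible_pmap (F : Presheaf C) x (u : F x) :
  compatible (P := res F) (fun i f => pmap F f u).
Proof. by move=> i j f g /=; rewrite pmap_comp. Qed.

Definition to_family (F : Presheaf C) x (u : F x) : family (res F) x :=
  exist _ _ (compatible_pmap u).

Lemma to_family_nat (F : Presheaf C) x y (h : Hom C y x) (u : F x) :
  to_family (pmap F h u) = pmap (ran (res F)) h (to_family u).
Proof. by apply: family_eq => i f /=; rewrite pmap_comp. Qed.

Definition ran_res_unit (F : Presheaf C) : PNat F (ran (res F)).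
Proof.
refine (@MkPNat C F (ran (res F)) (fun x u => to_family u) _).
by move=> x y f u; rewrite to_family_nat.
Defined.

Definition res_pnat (F F' : Presheaf C) (al : PNat F F') :
  PNat (res F) (res F').
Proof.
refine (@MkPNat D (res F) (res F') (fun i u => al (o i) u) _).
by move=> i j f u /=; rewrite pnat_nat.
Defined.

Lemma compatible_pnat (P P' : Presheaf D) (be : PNat P P') x
    (a : family P x) :
  compatible (P := P') (fun i f => be i (sval a i f)).
Proof. by move=> i j f g /=; rewrite (svalP a) pnat_nat. Qed.

Definition ran_pnat (P P' : Presheaf D) (be : PNat P P') :
  PNat (ran P) (ran P').
Proof.
refine (@MkPNat C (ran P) (ran P')
  (fun x a => exist _ _ (compatible_pnat be a)) _).
by move=> x y f a; apply: family_eq.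
Defined.

Lemma compatible_yoneda (P : Presheaf D) i (b : P i) :
  compatible (x := o i) (fun j f => pmap P (f : Hom D j i) b).
Proof. by move=> j k f g /=; rewrite pmap_comp. Qed.

Definition res_ran_counit_inv (P : Presheaf D) : PNat P (res (ran P)).
Proof.
refine (@MkPNat D P (res (ran P))
  (fun i b => exist _ _ (compatible_yoneda b)) _).
by move=> i j f b; apply: family_eq => k g /=; rewrite pmap_comp.
Defined.

Definition res_ran_counit (P : Presheaf D) : PNat (res (ran P)) P.
Proof.
refine (@MkPNat D (res (ran P)) P
  (fun i (a : family P (o i)) => sval a i (idm (o i))) _).
move=> i j f a /=.
by rewrite comp_idr -(svalP a i j (idm _) f) /= comp_idl.
Defined.

Section Sheaves.
Variables (J : topology C) (J_dense : dense_sub J) (J_full : covers_full J).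

Lemma ran_sheaf P : is_sheaf J (ran P).
Proof.
move=> x S JS; split=> [t t' Ett' y f [] | s].
  apply: family_eq => i g /=.
  rewrite -!(snat_ran_idm _ I (I : maxsieve x (o i) (comp f g))).
  by have /= -> := Ett' _ _ (J_full JS (comp f g)).
pose a i (f : Hom C (o i) x) := sval (snat s (J_full JS f)) i (idm (o i)).
have ca : compatible a.
  move=> i j f g; rewrite /a (snat_ran_idm _ (J_full JS f)).
  by rewrite -(svalP (snat s (J_full JS f)) i j (idm _) g) comp_idl.
exists (yoneda_snat (F := ran P) (exist _ a ca)) => y f Sf.
by apply: family_eq => i k; rewrite /= /a (snat_ran_idm _ Sf).
Qed.

Section Unit.
Variables (F : Presheaf C) (shF : is_sheaf J F).

Lemma sub_separated y (u v : F y) :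
  (forall j (k : Hom C (o j) y), pmap F k u = pmap F k v) -> u = v.
Proof.
move=> Euv; apply: (sheaf_separated shF (J_dense y)) => z f [[j [g h]] /= ->].
by rewrite !pmap_comp Euv.
Qed.

Lemma to_family_inj x : injective (@to_family F x).
Proof.
move=> u v Euv; apply: sub_separated => j k.
exact: (congr1 (fun a : family (res F) x => sval a j k) Euv).
Qed.

Section Glue.
Variables (x : Ob C) (a : family (res F) x).

(* The factorisation through some [o i] is chosen; by [glue_factorE] the
   result does not depend on the choice. *)
Definition glue_factor y (f : Hom C y x) (Df : factor_sieve x y f) : F y :=
  let t := proj1_sig (constructive_indefinite_description _ Df) in
  pmap F (tagged t).1 (sval a (tag t) (tagged t).2).

Lemma glue_factorE y f (Df : factor_sieve x y f) j (k : Hom C (o j) y) :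
  pmap F k (glue_factor Df) = sval a j (comp f k).
Proof.
rewrite /glue_factor.
case: (constructive_indefinite_description _ Df) => [[i [g h]] /= ->].
by rewrite -pmap_comp -comp_assoc (svalP a i j h (comp g k)).
Qed.

Lemma glue_factor_nat y z (f : Hom C y x) (g : Hom C z y)
    (Df : factor_sieve x y f) (Dfg : factor_sieve x z (comp f g)) :
  glue_factor Dfg = pmap F g (glue_factor Df).
Proof.
apply: sub_separated => j k.
by rewrite glue_factorE -pmap_comp glue_factorE comp_assoc.
Qed.

Lemma to_family_surj : exists u, to_family u = a.
Proof.
have [u Hu] := sheaf_glue shF (J_dense x) (MkSNat glue_factor_nat).
exists u; apply: family_eq => i f /=.
have Df : factor_sieve x (o i) f.
  by exists (existT _ i (idm (o i), f)); rewrite /= comp_idr.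
rewrite (Hu _ _ Df) /=.
by apply: sub_separated => j k; rewrite glue_factorE (svalP a i j f k).
Qed.

End Glue.

Definition of_family x (a : family (res F) x) : F x :=
  proj1_sig (constructive_indefinite_description _ (to_family_surj a)).

Lemma of_familyK x : cancel (@of_family x) (@to_family F x).
Proof.
move=> a.
exact: proj2_sig (constructive_indefinite_description _ (to_family_surj a)).
Qed.

Lemma to_familyK x : cancel (@to_family F x) (@of_family x).
Proof. by move=> u; apply: to_family_inj; rewrite of_familyK. Qed.

End Unit.

Definition ran_res_unit_inv (F : {F : Presheaf C | is_sheaf J F}) :
  PNat (ran (res (sval F))) (sval F).
Proof.
refine (@MkPNat C (ran (res (sval F))) (sval F)
  (fun x a => of_family (svalP F) a) _).
move=> x y f a; apply: (to_family_inj (svalP F)).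
by rewrite to_family_nat !of_familyK.
Defined.

Definition res_functor : Functor (ShCat J) (ShCat (@Jmin D)).
Proof.
refine (@MkFunctor (ShCat J) (ShCat (@Jmin D))
  (fun F => exist _ (res (sval F)) (Jmin_sheaf _))
  (fun F F' al => res_pnat al) _ _ _) => //.
by move=> F F' a b Eab i u; apply: Eab.
Defined.

Definition ran_functor : Functor (ShCat (@Jmin D)) (ShCat J).
Proof.
refine (@MkFunctor (ShCat (@Jmin D)) (ShCat J)
  (fun P => exist _ (ran (sval P)) (ran_sheaf (sval P)))
  (fun P P' be => ran_pnat be) _ _ _).
- by move=> P P' a b Eab x u; apply: family_eq => i f /=; apply: Eab.
- by move=> P x u; apply: family_eq.
- by move=> P1 P2 P3 g f x u; apply: family_eq.
Defined.

Definition comparison_equiv : EquivData (ShCat J) (ShCat (@Jmin D)).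
Proof.
refine (@MkEquiv (ShCat J) (ShCat (@Jmin D)) res_functor ran_functor
  ran_res_unit_inv (fun F => ran_res_unit (sval F)) _ _ _
  (fun P => res_ran_counit (sval P)) (fun P => res_ran_counit_inv (sval P))
  _ _ _) => //.
- by move=> F x u /=; rewrite to_familyK.
- by move=> F x a /=; rewrite of_familyK.
- move=> F F' h x a /=.
  apply: (to_family_inj (svalP F')); rewrite of_familyK.
  apply: family_eq => i f /=.
  by rewrite -pnat_nat -[in RHS](of_familyK (svalP F) a).
- by move=> P i b /=; rewrite pmap_id.
- move=> P x a /=; apply: family_eq => j f /=.
  by rewrite -(svalP a x j (idm _) f) /= comp_idl.
Defined.

End Sheaves.
End Comparison.
Arguments factor_sieve {C Ix} o x _ _.

Section InducedTopology.
Variables (C : Cat) (K : Type) (o : K -> Ob C) (Ix : Type) (e : Ix -> K).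
Variable J : topology C.

Lemma induced_dense_sub :
  dense_sub (fun i => o (e i)) J ->
  @dense_sub (FullSub o) Ix e (@induced_top C K o J).
Proof.
move=> J_dense k; split; first exact: factor_sieve_is_sieve.
by exists (factor_sieve (fun i => o (e i)) (o k)); split.
Qed.

Lemma induced_covers_full :
  covers_full (fun i => o (e i)) J ->
  @covers_full (FullSub o) Ix e (@induced_top C K o J).
Proof.
by move=> J_full k R [_ [S [JS RS]]] i f; apply/RS; apply: J_full JS i f.
Qed.

End InducedTopology.

(** * Equivalences of sheaf categories *)

Lemma cat_equivalent_sym (A B : SCat) :
  cat_equivalent A B -> cat_equivalent B A.
Proof.
case=> E; constructor.
exact: (@MkEquiv B A (eqv_G E) (eqv_F E) (eps E) (eps_inv E) (eps_iso1 E)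
  (eps_iso2 E) (eps_nat E) (eta E) (eta_inv E) (eta_iso1 E) (eta_iso2 E)
  (eta_nat E)).
Qed.

Section ShFunctor.
Variables (Ca Cb : Cat) (Ja : topology Ca) (Jb : topology Cb).
Variable F : Functor (ShCat Ja) (ShCat Jb).

Lemma sh_fmap_comp (x y z : SOb (ShCat Ja)) (g : SHom (ShCat Ja) y z)
    (f : SHom (ShCat Ja) x y) c (u : sval (F x) c) :
  fmap F g c (fmap F f c u) = fmap F (Scomp g f) c u.
Proof. by rewrite (fmap_comp F g f c u). Qed.

Lemma sh_fmap_id (x : SOb (ShCat Ja)) c (u : sval (F x) c) :
  fmap F (Sid x) c u = u.
Proof. exact: (fmap_id F x c u). Qed.

Lemma sh_fmap_proper (x y : SOb (ShCat Ja)) (f g : SHom (ShCat Ja) x y) :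
  Sheq f g -> forall c (u : sval (F x) c), fmap F f c u = fmap F g c u.
Proof. by move=> Efg c u; apply: (fmap_proper F Efg c u). Qed.

End ShFunctor.

Definition sh_functor_comp (Ca Cb Cc : Cat) (Ja : topology Ca)
    (Jb : topology Cb) (Jc : topology Cc) (F2 : Functor (ShCat Jb) (ShCat Jc))
    (F1 : Functor (ShCat Ja) (ShCat Jb)) :
  Functor (ShCat Ja) (ShCat Jc).
Proof.
refine (@MkFunctor (ShCat Ja) (ShCat Jc) (fun x => F2 (F1 x))
  (fun x y f => fmap F2 (fmap F1 f)) _ _ _).
- by move=> x y f g Efg; do 2![apply: fmap_proper]; apply: Efg.
- by move=> x c u /=; rewrite (sh_fmap_proper (fmap_id F1 x)) sh_fmap_id.
- move=> x y z g f c u /=.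
  by rewrite (sh_fmap_proper (fmap_comp F1 g f)) sh_fmap_comp.
Defined.

Lemma sh_equivalent_trans (C1 C2 C3 : Cat) (J1 : topology C1)
    (J2 : topology C2) (J3 : topology C3) :
  cat_equivalent (ShCat J1) (ShCat J2) ->
  cat_equivalent (ShCat J2) (ShCat J3) -> cat_equivalent (ShCat J1) (ShCat J3).
Proof.
case=> E1; case=> E2; constructor.
pose F1 := eqv_F E1; pose G1 := eqv_G E1.
pose F2 := eqv_F E2; pose G2 := eqv_G E2.
refine (@MkEquiv _ _ (sh_functor_comp F2 F1) (sh_functor_comp G1 G2)
  (fun x => Scomp (eta E1 x) (fmap G1 (eta E2 (F1 x))))
  (fun x => Scomp (fmap G1 (eta_inv E2 (F1 x))) (eta_inv E1 x)) _ _ _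
  (fun y => Scomp (eps E2 y) (fmap F2 (eps E1 (G2 y))))
  (fun y => Scomp (fmap F2 (eps_inv E1 (G2 y))) (eps_inv E2 y)) _ _ _).
- move=> x c u /=.
  rewrite sh_fmap_comp (sh_fmap_proper (eta_iso1 E2 (F1 x))) sh_fmap_id.
  exact: (eta_iso1 E1 x c u).
- move=> x c u /=; have /= -> := eta_iso2 E1 x c.
  by rewrite sh_fmap_comp (sh_fmap_proper (eta_iso2 E2 (F1 x))) sh_fmap_id.
- move=> x y h c u /=; have /= -> := eta_nat E1 h c; congr (_ _ c _).
  by rewrite !sh_fmap_comp (sh_fmap_proper (eta_nat E2 (fmap F1 h))).
- move=> y c u /=.
  rewrite sh_fmap_comp (sh_fmap_proper (eps_iso1 E1 (G2 y))) sh_fmap_id.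
  exact: (eps_iso1 E2 y c u).
- move=> y c u /=; have /= -> := eps_iso2 E2 y c.
  by rewrite sh_fmap_comp (sh_fmap_proper (eps_iso2 E1 (G2 y))) sh_fmap_id.
- move=> x y h c u /=; have /= -> := eps_nat E2 h c; congr (_ _ c _).
  by rewrite !sh_fmap_comp (sh_fmap_proper (eps_nat E1 (fmap G2 h))).
Qed.

(** * Finite G-sets and the topology J_sipp *)

Section OrbitMaps.
Variables (gT : finGroupType) (G : {group gT}).
Local Open Scope group_scope.

Lemma astab1E (X : gset G) (v : gcar X) a :
  (a \in 'C[v | gact X]) = (a \in G) && (gact X v a == v).
Proof. by rewrite !inE sub1set inE. Qed.

Lemma astab1_subG (X : gset G) (v : gcar X) : 'C[v | gact X] \subset G.
Proof. by apply/subsetP => a; rewrite astab1E => /andP[]. Qed.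

Lemma gHom_act (X Y : gset G) (f : gHom X Y) x a : a \in G ->
  sval f (gact X x a) = gact Y (sval f x) a.
Proof. by case: f => f /= /forallP/(_ x)/forall_inP f_equiv /f_equiv/eqP. Qed.

Lemma astab1_gHom (X Y : gset G) (f : gHom X Y) x :
  'C[x | gact X] \subset 'C[sval f x | gact Y].
Proof.
apply/subsetP => a; rewrite !astab1E => /andP[Ga /eqP xa].
by rewrite Ga -gHom_act // xa eqxx.
Qed.

Lemma coset_actE (H : {group gT}) (A : coset_car G H) a : a \in G ->
  val (gact (orbit_gset G H) A a) = val A :* a.
Proof.
move=> Ga; rewrite /= /coset_act /= val_subact.
by rewrite (subsetP (G_sub_coset_dom G H) a Ga) /= rcosetE.
Qed.

Lemma coset_pred_group (H : {group gT}) : coset_pred G H H.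
Proof. by apply/rcosetsP; exists 1; rewrite ?group1 ?rcoset1. Qed.

Definition base_coset (H : {group gT}) : coset_car G H :=
  exist _ (H : {set gT}) (coset_pred_group H).

Lemma coset_carE (H : {group gT}) (A : coset_car G H) :
  exists2 x, x \in G & A = gact (orbit_gset G H) (base_coset H) x.
Proof.
have /rcosetsP[x Gx EA] := valP A.
by exists x => //; apply: val_inj; rewrite coset_actE.
Qed.

Lemma astab_base_coset (H : {group gT}) : H \subset G ->
  'C[base_coset H | gact (orbit_gset G H)] = H.
Proof.
move=> sHG; apply/setP => a; rewrite (astab1E (X := orbit_gset G H)).
apply/andP/idP => [[Ga /eqP/(congr1 val)] | Ha].
  by rewrite coset_actE //= => <-; rewrite rcoset_refl.
have Ga := subsetP sHG a Ha; split=> //; apply/eqP/val_inj.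
by rewrite coset_actE //= rcoset_id.
Qed.

Lemma gHom_orbit_eq (H : {group gT}) (X : gset G)
    (f g : gHom (orbit_gset G H) X) :
  sval f (base_coset H) = sval g (base_coset H) -> f = g.
Proof.
move=> Efg; apply: val_inj; apply/ffunP => A.
by have [x Gx ->] := coset_carE A; rewrite !gHom_act // Efg.
Qed.

Section OrbitMap.
Variables (H : {group gT}) (X : gset G) (v : gcar X).
Hypothesis sHCv : H \subset 'C[v | gact X].

Definition orbit_map_fun (A : coset_car G H) : gcar X :=
  gact X v (repr (val A)).

Lemma orbit_map_funE x : x \in G ->
  orbit_map_fun (gact (orbit_gset G H) (base_coset H) x) = gact X v x.
Proof.
move=> Gx; rewrite /orbit_map_fun coset_actE //=.
have /rcosetP[h Hh ->] := mem_repr_rcoset H x.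
have Ch := subsetP sHCv h Hh.
have Gh := subsetP (astab1_subG v) h Ch.
by rewrite actMin // (astab_act Ch (set11 v)).
Qed.

Lemma orbit_map_equiv :
  @equivariantb gT G (orbit_gset G H) X [ffun A => orbit_map_fun A].
Proof.
apply/forallP => A; apply/forall_inP => a Ga; rewrite !ffunE.
have [x Gx ->] := coset_carE A.
by rewrite -actMin // !orbit_map_funE ?groupM // actMin.
Qed.

Definition orbit_map : gHom (orbit_gset G H) X :=
  exist (@equivariantb gT G (orbit_gset G H) X) _ orbit_map_equiv.

Lemma orbit_map_base : sval orbit_map (base_coset H) = v.
Proof.
rewrite /= ffunE -[base_coset H](act1 (gact (orbit_gset G H))).
by rewrite orbit_map_funE // act1.
Qed.

End OrbitMap.
End OrbitMaps.

Section Jsipp.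
Variables (gT : finGroupType) (p : nat).
Hypothesis p_prime : prime p.
Local Open Scope group_scope.

Lemma Sylow_index_coprime (H P : {group gT}) :
  p.-Sylow(H) P -> coprime #|H : P| p.
Proof. by case/and3P => _ _; rewrite coprime_sym prime_coprime // -p'natE. Qed.

Lemma pgroup_sub_conj_coprime_index (K H Q : {group gT}) :
    K \subset H -> coprime #|H : K| p -> Q \subset H -> p.-group Q ->
  exists2 x, x \in H & Q \subset K :^ x.
Proof.
move=> sKH coHK sQH pQ; have [P sylP] := Sylow_exists p K.
have sPK := pHall_sub sylP.
have sylHP : p.-Sylow(H) P.
  apply/and3P; split; [exact: subset_trans sKH | exact: pHall_pgroup sylP |].
  rewrite -(Lagrange_index sKH sPK) pnatM p'natE // -prime_coprime //.
  by rewrite coprime_sym coHK; case/and3P: sylP.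
have [x Hx sQPx] := Sylow_subJ sylHP sQH pQ.
by exists x => //; apply: subset_trans sQPx _; rewrite conjSg.
Qed.

Variable G : {group gT}.
Local Notation porbit :=
  (fun Q : orbitp_idx G p => orbit_gset G (sval Q) : Ob (GSetCat G)).

Lemma Jsipp_dense : dense_sub porbit (Jsipp G p).
Proof.
move=> X; split; first exact: factor_sieve_is_sieve.
pose P u := sval (Sylow_exists p 'C[u | gact X]%G).
have sylP u : p.-Sylow('C[u | gact X]) (P u) := svalP (Sylow_exists p _).
have sPC u : P u \subset 'C[u | gact X] := pHall_sub (sylP u).
have sPG u : P u \subset G := subset_trans (sPC u) (astab1_subG u).
have pidx u : (P u \subset G) && p.-group (P u).
  by rewrite sPG (pHall_pgroup (sylP u)).
exists (gcar X), (fun u => orbit_gset G (P u)), (fun u => orbit_map (sPC u)).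
split=> u.
  exists (existT _ (exist _ (P u) (pidx u)) (gid _, orbit_map (sPC u))) => /=.
  exact: esym (gcomp_idr _).
exists u, (base_coset G (P u)); split; first exact: orbit_map_base.
by rewrite astab_base_coset //; apply: Sylow_index_coprime (sylP u).
Qed.

Lemma Jsipp_covers_full : covers_full porbit (Jsipp G p).
Proof.
move=> X S [S_sieve [Ix [U [alpha [S_alpha alpha_cover]]]]] [Q /= pQ] f.
have /andP[sQG pgQ] := pQ.
pose u := sval f (base_coset G Q).
have sQCu : Q \subset 'C[u | gact X].
  by rewrite -{1}(astab_base_coset sQG); apply: (astab1_gHom f).
have [i [ui [alpha_ui coprime_ui]]] := alpha_cover u.
have sCC : 'C[ui | gact (U i)] \subset 'C[u | gact X].
  by rewrite -alpha_ui; apply: astab1_gHom.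
have [x Cx sQC] := pgroup_sub_conj_coprime_index sCC coprime_ui sQCu pgQ.
have Gx := subsetP (astab1_subG u) x Cx.
rewrite -astab1_act_in // in sQC.
have -> : f = gcomp (alpha i) (orbit_map sQC).
  apply: gHom_orbit_eq; rewrite /= ffunE (orbit_map_base sQC).
  by rewrite (gHom_act (alpha i)) // alpha_ui (astab_act Cx (set11 u)).
exact: S_sieve (S_alpha i).
Qed.

End Jsipp.

Theorem corollary3p2p6 (gT : finGroupType) (G : {group gT}) (p : nat)
    (p_prime : prime p) (p_dvd : p %| #|G|) :
  cat_equivalent (ShCat (Jsipp G p)) (ShCat (Jsipp_orb G p)) /\
  cat_equivalent (ShCat (Jsipp_orb G p)) (ShCat (@Jmin (OrbitpCat G p))) /\
  (forall F : Presheaf (OrbitpCat G p), is_sheaf (@Jmin (OrbitpCat G p)) F).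
Proof.
have dense := Jsipp_dense p_prime (G := G).
have full := Jsipp_covers_full p_prime (G := G).
have EG : cat_equivalent (ShCat (Jsipp G p)) (ShCat (@Jmin (OrbitpCat G p))).
  exact: inhabits (comparison_equiv dense full).
pose orb (H : orbit_idx G) : Ob (GSetCat G) := orbit_gset G (sval H).
pose incl (Q : orbitp_idx G p) : orbit_idx G :=
  exist _ (sval Q) (proj1 (andP (svalP Q))).
have EO : EquivData (ShCat (Jsipp_orb G p)) (ShCat (@Jmin (OrbitpCat G p))).
  apply: (@comparison_equiv (OrbitCat G) _ incl (Jsipp_orb G p)).
    exact: (@induced_dense_sub _ _ orb _ incl _ dense).
  exact: (@induced_covers_full _ _ orb _ incl _ full).
split; [exact: sh_equivalent_trans EG (cat_equivalent_sym (inhabits EO)) |].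
by split; [exact: inhabits EO | exact: Jmin_sheaf].
Qed.
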